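(* Let $n\ge 2$ and $2\le m\le n$ be integers and let $\alpha\in(0,2]$. Define the $n$-qubit observables $\mathcal{M}_Z=(|0\rangle\langle 0|)^{\otimes n}+(|1\rangle\langle 1|)^{\otimes n}$ and $\mathcal{M}_X=\sigma_x^{\otimes n}$, where $\sigma_x=|0\rangle\langle 1|+|1\rangle\langle 0|$, and let $\mathcal{W}^n_{se}(\alpha)=\alpha\mathcal{M}_Z+\mathcal{M}_X$. Then for every $m$-separable $n$-qubit state $\rho$, $$\operatorname{Tr}\big[\rho\,\mathcal{W}^n_{se}(\alpha)\big]\le \max\Big\{\alpha,\ \frac{\alpha}{2^{m-1}}+1\Big\}.$$
   Context: $\{|0\rangle,|1\rangle\}$ is the computational basis of $\mathbb{C}^2$. An $n$-qubit pure state $|\phi\rangle$ is $m$-separable if the $n$ qubits can be partitioned into $m$ nonempty disjoint subsets $\mathcal{G}_1,\dots,\mathcal{G}_m$ such that $|\phi\rangle=\bigotimes_{i=1}^m|\psi_{\mathcal{G}_i}\rangle$ with $|\psi_{\mathcal{G}_i}\rangle$ a pure state of the qubits in $\mathcal{G}_i$. A mixed $n$-qubit state $\rho$ is $m$-separable if it is a convex combination of projectors onto $m$-separable pure states (the partitions may differ between terms). *)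

From HB Require Import structures.
From mathcomp Require Import all_boot all_order all_algebra.
From mathcomp Require Import complex.
From mathcomp Require Import reals.
Set Implicit Arguments. Unset Strict Implicit. Unset Printing Implicit Defensive.
Import Order.TTheory GRing.Theory Num.Theory.
Local Open Scope ring_scope.

(* Computational basis of (C^2)^{\otimes n} is indexed by i : 'I_(2^n);
   qubit k of basis state i is the k-th binary digit of i. *)
Definition qbit (n : nat) (i : 'I_(2 ^ n)) (k : 'I_n) : bool := odd (i %/ 2 ^ k).

Section Qubits.
Variables (C : numClosedFieldType) (n : nat).

(* single-qubit matrices, entry (b, c) = <b| . |c> *)
Definition sigma_x (b c : bool) : C := (b != c)%:R.
Definition proj0 (b c : bool) : C := ((~~ b) && (~~ c))%:R.
Definition proj1 (b c : bool) : C := (b && c)%:R.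

(* entries of n-fold tensor products are products of entries *)
Definition MZ : 'M[C]_(2 ^ n) :=
  \matrix_(i, j) ((\prod_(k < n) proj0 (qbit i k) (qbit j k))
                + (\prod_(k < n) proj1 (qbit i k) (qbit j k))).
Definition MX : 'M[C]_(2 ^ n) :=
  \matrix_(i, j) (\prod_(k < n) sigma_x (qbit i k) (qbit j k)).
Definition Wse (alpha : C) : 'M[C]_(2 ^ n) := alpha *: MZ + MX.

Definition adj (p q : nat) (A : 'M[C]_(p, q)) : 'M[C]_(q, p) := (map_mx Num.conj A)^T.

Definition pure_state (psi : 'cV[C]_(2 ^ n)) : Prop :=
  \sum_(i < 2 ^ n) `|psi i 0| ^+ 2 = 1.

(* psi is m-separable: the qubits are partitioned into m nonempty groups
   (qubit k lies in group part k, every group nonempty) and psi is a tensor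
   product of states psi_g of the groups, i.e. its amplitude at basis state i
   is the product over g of an amplitude f g i depending only on the bits of
   i in group g. *)
Definition m_separable_pure (m : nat) (psi : 'cV[C]_(2 ^ n)) : Prop :=
  pure_state psi /\
  exists (part : 'I_n -> 'I_m) (f : 'I_m -> 'I_(2 ^ n) -> C),
    (forall g : 'I_m, exists k : 'I_n, part k = g) /\
    (forall (g : 'I_m) (i j : 'I_(2 ^ n)),
        (forall k : 'I_n, part k = g -> qbit i k = qbit j k) -> f g i = f g j) /\
    (forall i : 'I_(2 ^ n), psi i 0 = \prod_(g < m) f g i).

Definition m_separable (m : nat) (rho : 'M[C]_(2 ^ n)) : Prop :=
  exists (N : nat) (w : 'I_N -> C) (psi : 'I_N -> 'cV[C]_(2 ^ n)),
    (forall j, 0 <= w j) /\ \sum_(j < N) w j = 1 /\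
    (forall j, m_separable_pure m (psi j)) /\
    rho = \sum_(j < N) w j *: (psi j *m adj (psi j)).

End Qubits.

From HB Require Import structures.
From mathcomp Require Import all_boot all_order all_algebra.
From mathcomp Require Import complex.
From mathcomp Require Import reals.
From mathcomp Require Import ring lra.
Import Order.TTheory GRing.Theory Num.Theory Normc.
Local Open Scope ring_scope.

(* Let psi be a product of states psi_g of the blocks g of an m-partition,
   and write p_g, q_g for the moduli of the amplitudes of psi_g at the
   all-zeros and all-ones strings of block g and r_g for its remaining weight,
   so that prod_g (p_g^2 + q_g^2 + r_g) = 1.  Then <psi|M_Z|psi> = P^2 + Q^2
   with P = prod_g p_g, Q = prod_g q_g, while <psi|M_X|psi> factors over the
   blocks; inside a block, sum_y |a(not y)| |a(y)| <= r_g + 2 p_g q_g because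
   sum_y (|a(not y)| - |a(y)|)^2 >= 2 (p_g - q_g)^2, the two strings all-zeros
   and all-ones being exchanged by the flip.  So <psi|M_X|psi> <= Y with
   Y = prod_g (r_g + 2 p_g q_g), and an induction on the number of blocks gives
   Y + (P - Q)^2 <= 1, while trivially 2^m P Q <= Y.  Therefore
   alpha (P^2 + Q^2) + Y <= alpha + Y (1 - alpha + alpha / 2^(m-1)), which is
   affine in Y in [0, 1], hence at most max(alpha, alpha / 2^(m-1) + 1).
   Mixed states follow by convexity. *)

Section ScalarBounds.
Context {R : realFieldType}.

Lemma flip_pair_step (P Q Y T p q r : R) :
  0 <= r -> 2 * P * Q <= Y -> Y + (P - Q) ^+ 2 <= T ->
  Y * (r + 2 * p * q) + (P * p - Q * q) ^+ 2 <= T * (p ^+ 2 + q ^+ 2 + r).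
Proof.
move=> r0 hY hT; rewrite -subr_ge0.
have -> : T * (p ^+ 2 + q ^+ 2 + r) - (Y * (r + 2 * p * q) + (P * p - Q * q) ^+ 2)
  = (T - Y - (P - Q) ^+ 2) * (p ^+ 2 + q ^+ 2 + r) + (Y - 2 * P * Q) * (p - q) ^+ 2
    + (P - Q) ^+ 2 * r + (P * q - Q * p) ^+ 2 by ring.
have gapT : 0 <= T - Y - (P - Q) ^+ 2 by lra.
have gapY : 0 <= Y - 2 * P * Q by lra.
have pqr_ge0 : 0 <= p ^+ 2 + q ^+ 2 + r by rewrite !addr_ge0 ?sqr_ge0.
by rewrite !addr_ge0 ?sqr_ge0 // mulr_ge0 ?sqr_ge0.
Qed.

Lemma prod_pair_ler k (p q r : 'I_k -> R) :
  (forall i, 0 <= p i) -> (forall i, 0 <= q i) -> (forall i, 0 <= r i) ->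
  2 ^+ k * (\prod_i p i) * (\prod_i q i) <= \prod_i (r i + 2 * p i * q i).
Proof.
move=> p0 q0 r0.
rewrite -[in X in X * _ * _](card_ord k) -prodr_const -!big_split /=.
by apply: ler_prod => i _; rewrite lerDr r0 !mulr_ge0.
Qed.

Lemma prod_flip_pair_ler m (p q r : 'I_m -> R) : (0 < m)%N ->
  (forall i, 0 <= p i) -> (forall i, 0 <= q i) -> (forall i, 0 <= r i) ->
  \prod_i (r i + 2 * p i * q i) + (\prod_i p i - \prod_i q i) ^+ 2
    <= \prod_i (p i ^+ 2 + q i ^+ 2 + r i).
Proof.
case: m p q r => // k p q r _; elim: k p q r => [|k IH] p q r p0 q0 r0.
  by rewrite !big_ord1 -subr_ge0 [X in 0 <= X](_ : _ = 0) //; ring.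
rewrite !(big_ord_recr k.+1) /=.
apply: flip_pair_step => //; last exact: IH.
set w := widen_ord (leqnSn k.+1).
have := @prod_pair_ler k.+1 (p \o w) (q \o w) (r \o w) (fun i => p0 _) (fun i => q0 _) (fun i => r0 _).
apply: le_trans; rewrite ler_wpM2r ?prodr_ge0 // ler_wpM2r ?prodr_ge0 //.
by rewrite exprS ler_peMr ?exprn_ege1 ?ler0n ?ler1n.
Qed.

Lemma value_le_max m (alpha P Q Y : R) : (0 < m)%N ->
  0 < alpha -> 0 <= P -> 0 <= Q -> 2 ^+ m * P * Q <= Y -> Y + (P - Q) ^+ 2 <= 1 ->
  alpha * (P ^+ 2 + Q ^+ 2) + Y <= Num.max alpha (alpha / 2 ^+ (m - 1) + 1).
Proof.
case: m => // k _ a0 P0 Q0 hPQ hY; rewrite subn1 /=.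
set d := (2 ^+ k)^-1.
have d0 : 0 < d by rewrite invr_gt0 exprn_gt0 ?ltr0n.
have hPQd : 2 * P * Q <= Y * d.
  rewrite ler_pdivlMr ?exprn_gt0 ?ltr0n //; apply: le_trans hPQ.
  by rewrite exprS; lra.
have Y0 : 0 <= Y by apply: le_trans hPQ; rewrite !mulr_ge0 ?exprn_ge0 ?ler0n.
have hS : alpha * (P ^+ 2 + Q ^+ 2) <= alpha * (1 - Y + Y * d).
  apply: ler_wpM2l; first exact: ltW.
  have -> : P ^+ 2 + Q ^+ 2 = (P - Q) ^+ 2 + 2 * P * Q by ring.
  lra.
have Y1 : Y <= 1 by have := sqr_ge0 (P - Q); lra.
(* the bound is affine in Y, so it is attained at Y = 0 or Y = 1 *)
rewrite le_max; case: (lerP (1 - alpha + alpha * d) 0) => hK; apply/orP.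
- by left; have := mulr_ge0_le0 Y0 hK; lra.
- right; have : 0 <= 1 - Y by rewrite subr_ge0.
  by move/mulr_ge0/(_ (ltW hK)); lra.
Qed.

Lemma sum_sqr_pair_ler {I : finType} {S : pred I} (b : I -> R) {a c : I} :
  S a -> S c -> a != c -> b a ^+ 2 + b c ^+ 2 <= \sum_(y | S y) b y ^+ 2.
Proof.
move=> Sa Sc ac; rewrite (bigD1 a) // (bigD1 c) /=; last by rewrite Sc eq_sym.
by rewrite addrA lerDl sumr_ge0 // => y _; rewrite sqr_ge0.
Qed.

Lemma sum_involution_ler {I : finType} {S : pred I} (b : I -> R) {s : I -> I} {a : I} :
  involutive s -> (forall y, S (s y) = S y) -> S a -> s a != a ->
  \sum_(y | S y) b (s y) * b y + (b a - b (s a)) ^+ 2 <= \sum_(y | S y) b y ^+ 2.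
Proof.
move=> sK Ss Sa sa_a.
have sum_sqr_s : \sum_(y | S y) b (s y) ^+ 2 = \sum_(y | S y) b y ^+ 2.
  by rewrite (reindex_inj (inv_inj sK)) /=; apply: eq_big => y; rewrite ?Ss ?sK.
have Ssa : S (s a) by rewrite Ss.
have := sum_sqr_pair_ler (fun y => b (s y) - b y) Sa Ssa (_ : a != s a).
rewrite eq_sym sK => /(_ sa_a).
have -> : \sum_(y | S y) (b (s y) - b y) ^+ 2
  = \sum_(y | S y) b (s y) ^+ 2 + \sum_(y | S y) b y ^+ 2 - 2 * \sum_(y | S y) b (s y) * b y.
  rewrite mulr_sumr -!big_split -sumrB /=; apply: eq_bigr => y _; ring.
rewrite sum_sqr_s; have -> : (b a - b (s a)) ^+ 2 = (b (s a) - b a) ^+ 2 by ring.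
lra.
Qed.

End ScalarBounds.

Lemma odd_div_exp2_inj n a b : (a < 2 ^ n)%N -> (b < 2 ^ n)%N ->
  (forall k, k < n -> odd (a %/ 2 ^ k) = odd (b %/ 2 ^ k))%N -> a = b.
Proof.
elim: n a b => [|n IH] a b; first by rewrite expn0 !ltnS !leqn0 => /eqP -> /eqP ->.
move=> a_lt b_lt eq_odd.
have a2_eq_b2 : (a %/ 2 = b %/ 2)%N.
  apply: IH; rewrite ?ltn_divLR -?expnSr // => k lt_kn.
  by rewrite -!divnMA -expnS eq_odd.
have := eq_odd 0 isT; rewrite !divn1 => odd_eq.
by rewrite -[a]odd_double_half -[b]odd_double_half odd_eq -!divn2 a2_eq_b2.
Qed.

Local Notation bvec n := {ffun 'I_n -> bool}.

Definition bits n (i : 'I_(2 ^ n)) : bvec n := [ffun k => qbit i k].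
Arguments bits {n}.

Lemma bits_bij n : bijective (@bits n).
Proof.
apply: inj_card_bij; last by rewrite card_ffun card_bool !card_ord.
move=> i j /ffunP eq_ij; apply: val_inj => /=.
apply: (@odd_div_exp2_inj n); [exact: ltn_ord | exact: ltn_ord | move=> k lt_kn].
by have := eq_ij (Ordinal lt_kn); rewrite !ffunE.
Qed.

Definition bzero n : bvec n := [ffun=> false].
Definition bone n : bvec n := [ffun=> true].
Definition bnot n (x : bvec n) : bvec n := [ffun k => ~~ x k].
Arguments bnot {n}.

Lemma eq_bzero n (x : bvec n) : (x == bzero n) = [forall k, ~~ x k].
Proof.
apply/eqP/forallP => [-> k | x0]; first by rewrite ffunE.
by apply/ffunP => k; rewrite ffunE (negbTE (x0 k)).
Qed.

Lemma eq_bone n (x : bvec n) : (x == bone n) = [forall k, x k].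
Proof.
apply/eqP/forallP => [-> k | x1]; first by rewrite ffunE.
by apply/ffunP => k; rewrite ffunE x1.
Qed.

Lemma eq_bnot n (x y : bvec n) : (x == bnot y) = [forall k, x k != y k].
Proof.
apply/eqP/forallP => [-> k | neq]; first by rewrite ffunE; case: (y k).
by apply/ffunP => k; move: (neq k); rewrite ffunE; case: (x k); case: (y k).
Qed.

Lemma bnotK n : involutive (@bnot n).
Proof. by move=> x; apply/ffunP => k; rewrite !ffunE negbK. Qed.

Section Blocks.
Context {n m : nat} (part : 'I_n -> 'I_m).

Definition bmask (g : 'I_m) (x : bvec n) : bvec n := [ffun k => (part k == g) && x k].
Definition bflip (g : 'I_m) (x : bvec n) : bvec n := [ffun k => (part k == g) (+) x k].

Lemma bmask_id g x : bmask g (bmask g x) = bmask g x.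
Proof. by apply/ffunP => k; rewrite !ffunE andbA andbb. Qed.

Lemma bflipK g : involutive (bflip g).
Proof. by move=> x; apply/ffunP => k; rewrite !ffunE addbA addbb. Qed.

Lemma bmask_bflip g x : bmask g (bflip g x) = bmask g (bflip g (bmask g x)).
Proof. by apply/ffunP => k; rewrite !ffunE; case: (part k == g). Qed.

Lemma bmask_bnot g x : bmask g (bnot x) = bmask g (bflip g (bmask g x)).
Proof. by apply/ffunP => k; rewrite !ffunE; case: (part k == g). Qed.

Lemma bmask_bzero g : bmask g (bzero n) = bzero n.
Proof. by apply/ffunP => k; rewrite !ffunE andbF. Qed.

Lemma bmask_bflip_fixed g y : (bmask g (bflip g y) == bflip g y) = (bmask g y == y).
Proof.
apply/eqP/eqP => /ffunP fixed; apply/ffunP => k; move: (fixed k); rewrite !ffunE;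
  by case: (part k == g).
Qed.

Lemma bflip_bzero g : bflip g (bzero n) = bmask g (bone n).
Proof. by apply/ffunP => k; rewrite !ffunE addbF andbT. Qed.

Lemma bflip_bzero_neq g : (exists k, part k = g) -> bflip g (bzero n) != bzero n.
Proof. by move=> [k <-]; apply/eqP => /ffunP/(_ k); rewrite !ffunE eqxx. Qed.

(* x corresponds bijectively to the family (bmask g x)_g of its restrictions to the blocks. *)
Lemma sum_prod_bmask (K : comNzRingType) (G : 'I_m -> bvec n -> K) :
  (forall g x, G g x = G g (bmask g x)) ->
  \sum_x \prod_g G g x = \prod_g \sum_(y | bmask g y == y) G g y.
Proof.
move=> G_local; rewrite bigA_distr_big_dep /=.
pose split_x x : {ffun 'I_m -> bvec n} := [ffun g => bmask g x].
pose glue (f : {ffun 'I_m -> bvec n}) : bvec n := [ffun k => f (part k) k].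
rewrite (reindex_onto split_x glue) => [|f /familyP f_fam].
  apply: eq_big => x.
    apply/esym/andP; split.
      by apply/familyP => g; rewrite ffunE unfold_in bmask_id.
    by apply/eqP/ffunP => k; rewrite !ffunE eqxx.
  by move=> _; apply: eq_bigr => g _; rewrite ffunE -G_local.
apply/ffunP => g; apply/ffunP => k; rewrite !ffunE.
have /eqP <- := f_fam g; rewrite !ffunE.
by case: eqP => [<-|]; rewrite ?eqxx.
Qed.

End Blocks.

Lemma sum_conj_involution_real {C : numClosedFieldType} {I : finType} {s : I -> I} (h : I -> C) :
  involutive s -> \sum_x (h (s x))^* * h x \is Num.real.
Proof.
move=> sK; apply/CrealP; rewrite rmorph_sum (reindex_inj (inv_inj sK)) /=.
by apply: eq_bigr => x _; rewrite sK rmorphM /= conjCK mulrC.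
Qed.

Section ComplexNorm.
Context {R : rcfType}.
Implicit Types z : R[i].

Lemma normr_normc z : `|z| = (normc z)%:C%C.
Proof. by case: z. Qed.

Lemma normc_ge0 z : 0 <= normc z.
Proof. by case: z => a b; apply: sqrtr_ge0. Qed.

Lemma conj_mul_normc z : z^* * z = (normc z ^+ 2)%:C%C.
Proof. by rewrite rmorphXn /= -normr_normc normCKC. Qed.

Lemma normc_prod (I : finType) (F : I -> R[i]) : normc (\prod_i F i) = \prod_i normc (F i).
Proof. exact: (big_morph _ (@normcM R) (@normc1 R)). Qed.

End ComplexNorm.

Lemma prodr_natb (K : comNzRingType) (I : finType) (b : I -> bool) :
  \prod_i ((b i)%:R : K) = [forall i, b i]%:R.
Proof.
have [/forallP b_all | /forallPn [j /negbTE bj]] := boolP [forall i, b i].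
  by rewrite big1 // => i _; rewrite b_all.
by rewrite (bigD1 j) //= bj mul0r.
Qed.

Lemma sum_mul_delta {K : comNzRingType} {I : finType} (a : I) (F : I -> K) :
  \sum_y F y * (y == a)%:R = F a.
Proof.
by rewrite (bigD1 a) //= eqxx mulr1 big1 ?addr0 // => y /negbTE ->; rewrite mulr0.
Qed.

Section TraceFormula.
Context {C : numClosedFieldType} {n : nat}.

Lemma trace_proj_mul (A : 'M[C]_(2 ^ n)) (psi : 'cV[C]_(2 ^ n)) :
  \tr ((psi *m adj psi) *m A) = \sum_j \sum_i (psi i 0)^* * A i j * psi j 0.
Proof.
rewrite -mulmxA mxtrace_mulC /mxtrace big_ord1 !mxE.
apply: eq_bigr => j _; rewrite !mxE mulr_suml; apply: eq_bigr => i _.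
by rewrite /adj !mxE.
Qed.

Lemma MZ_bits i j : MZ C n i j =
  (bits i == bzero n)%:R * (bits j == bzero n)%:R + (bits i == bone n)%:R * (bits j == bone n)%:R.
Proof.
rewrite mxE !eq_bzero !eq_bone -!prodr_natb -!big_split.
by congr (_ + _); apply: eq_bigr => k _; rewrite !ffunE /= -natrM mulnb.
Qed.

Lemma MX_bits i j : MX C n i j = (bits i == bnot (bits j))%:R.
Proof. by rewrite mxE eq_bnot -prodr_natb; apply: eq_bigr => k _; rewrite !ffunE. Qed.

Context {alpha : C} {psi : 'cV[C]_(2 ^ n)} {idx : bvec n -> 'I_(2 ^ n)}.
Hypotheses (idxK : cancel idx (@bits n)) (bitsK : cancel (@bits n) idx).
Let amp x := psi (idx x) 0.

Lemma trace_Wse : \tr ((psi *m adj psi) *m Wse n alpha) =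
  alpha * ((amp (bzero n))^* * amp (bzero n) + (amp (bone n))^* * amp (bone n))
  + \sum_x (amp (bnot x))^* * amp x.
Proof.
have idx_bij : {on [pred i | true], bijective idx} by apply: onW_bij; exists (@bits n).
have entry x y : Wse n alpha (idx y) (idx x) =
    alpha * ((y == bzero n)%:R * (x == bzero n)%:R + (y == bone n)%:R * (x == bone n)%:R)
    + (y == bnot x)%:R.
  by rewrite /Wse 2!mxE MZ_bits MX_bits !idxK.
have inner x : \sum_y (amp y)^* * Wse n alpha (idx y) (idx x) * amp x =
    alpha * ((amp (bzero n))^* * amp x * (x == bzero n)%:R)
    + alpha * ((amp (bone n))^* * amp x * (x == bone n)%:R) + (amp (bnot x))^* * amp x.
  rewrite -(sum_mul_delta _ (fun y => alpha * ((amp y)^* * amp x * (x == bzero n)%:R)))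
    -(sum_mul_delta _ (fun y => alpha * ((amp y)^* * amp x * (x == bone n)%:R)))
    -(sum_mul_delta _ (fun y => (amp y)^* * amp x)) -!big_split /=.
  by apply: eq_bigr => y _; rewrite entry; ring.
rewrite trace_proj_mul (reindex idx) //=.
under eq_bigr => x _ do rewrite (reindex idx) //= inner.
by rewrite !big_split /= -!mulr_sumr !sum_mul_delta mulrDr.
Qed.

End TraceFormula.

Section ProductState.
Context {R : rcfType} {n m : nat} {part : 'I_n -> 'I_m} {F : 'I_m -> bvec n -> R[i]}.
Hypothesis part_surj : forall g, exists k, part k = g.
Hypothesis F_local : forall g x, F g x = F g (bmask part g x).

Local Notation block g := [pred y | bmask part g y == y].
Let p g := normc (F g (bzero n)).
Let q g := normc (F g (bmask part g (bone n))).
Let N g := \sum_(y in block g) normc (F g y) ^+ 2.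
Let r g := N g - p g ^+ 2 - q g ^+ 2.

Lemma F_bnot g y : F g (bnot y) = F g (bflip part g y).
Proof. by rewrite F_local bmask_bnot -bmask_bflip -F_local. Qed.

Lemma block_rest_ge0 g : 0 <= r g.
Proof.
rewrite /r -addrA -opprD subr_ge0 /p /q -bflip_bzero.
apply: sum_sqr_pair_ler; rewrite ?inE ?bmask_bzero // ?bflip_bzero ?bmask_id //.
by rewrite -bflip_bzero eq_sym bflip_bzero_neq.
Qed.

Lemma block_flip_ler g :
  \sum_(y in block g) normc (F g (bflip part g y)) * normc (F g y) <= r g + 2 * p g * q g.
Proof.
have := sum_involution_ler (fun y => normc (F g y)) (bflipK part g)
  (fun y => bmask_bflip_fixed part g y) (_ : bmask part g (bzero n) == bzero n)
  (bflip_bzero_neq part g (part_surj g)).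
rewrite bmask_bzero eqxx bflip_bzero -/(p g) -/(q g) -/(N g) => /(_ isT).
rewrite /r; have -> : (p g - q g) ^+ 2 = p g ^+ 2 + q g ^+ 2 - 2 * p g * q g by ring.
lra.
Qed.

Lemma sum_normc_prod : \sum_x normc (\prod_g F g x) ^+ 2 = \prod_g N g.
Proof.
rewrite -sum_prod_bmask => [|g x]; last by rewrite -F_local.
by apply: eq_bigr => x _; rewrite normc_prod prodrXl.
Qed.

Lemma norm_sum_bnot_ler :
  `|\sum_x (\prod_g F g (bnot x))^* * \prod_g F g x| <= (\prod_g (r g + 2 * p g * q g))%:C%C.
Proof.
have -> : \sum_x (\prod_g F g (bnot x))^* * \prod_g F g x
    = \prod_g \sum_(y in block g) (F g (bflip part g y))^* * F g y.
  rewrite -sum_prod_bmask => [|g x]; last first.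
    by rewrite [in RHS]F_local bmask_bflip bmask_id -bmask_bflip -!F_local.
  apply: eq_bigr => x _; rewrite rmorph_prod -big_split /=.
  by apply: eq_bigr => g _; rewrite F_bnot.
rewrite normr_prod rmorph_prod; apply: ler_prod => g _; rewrite normr_ge0 /=.
apply: le_trans (ler_norm_sum _ _ _) _.
under eq_bigr do rewrite normrM norm_conjC !normr_normc -rmorphM.
by rewrite -rmorph_sum lecR block_flip_ler.
Qed.

Lemma product_state_value_le (alpha : R) : (0 < m)%N -> 0 < alpha ->
  \sum_x normc (\prod_g F g x) ^+ 2 = 1 ->
  alpha%:C%C * ((\prod_g F g (bzero n))^* * \prod_g F g (bzero n)
                + (\prod_g F g (bone n))^* * \prod_g F g (bone n))
  + \sum_x (\prod_g F g (bnot x))^* * \prod_g F g x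
  <= (Num.max alpha (alpha / 2 ^+ (m - 1) + 1))%:C%C.
Proof.
move=> m_gt0 a0 normed.
have p0 g : 0 <= p g := normc_ge0 _.
have q0 g : 0 <= q g := normc_ge0 _.
have -> : (\prod_g F g (bzero n))^* * \prod_g F g (bzero n) = ((\prod_g p g) ^+ 2)%:C%C.
  by rewrite conj_mul_normc normc_prod.
have -> : (\prod_g F g (bone n))^* * \prod_g F g (bone n) = ((\prod_g q g) ^+ 2)%:C%C.
  rewrite conj_mul_normc normc_prod; congr ((_ ^+ 2)%:C%C).
  by apply: eq_bigr => g _; rewrite F_local.
have X_le := le_trans (real_ler_norm (sum_conj_involution_real _ (bnotK n))) norm_sum_bnot_ler.
apply: le_trans (lerD (lexx _) X_le) _.
rewrite -rmorphD -rmorphM -rmorphD lecR; apply: value_le_max; rewrite ?prodr_ge0 //.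
  exact: prod_pair_ler p0 q0 block_rest_ge0.
have total : \prod_g (p g ^+ 2 + q g ^+ 2 + r g) = 1.
  rewrite -[RHS]normed sum_normc_prod; apply: eq_bigr => g _; rewrite /r; ring.
by rewrite -[X in _ <= X]total; apply: prod_flip_pair_ler m_gt0 p0 q0 block_rest_ge0.
Qed.

End ProductState.

Lemma pure_value_le (R : realType) n m (alpha : R) (psi : 'cV[R[i]]_(2 ^ n)) :
  (0 < m)%N -> 0 < alpha -> m_separable_pure m psi ->
  \tr ((psi *m adj psi) *m Wse n alpha%:C%C) <= (Num.max alpha (alpha / 2 ^+ (m - 1) + 1))%:C%C.
Proof.
move=> m_gt0 a0 [normed [part [f [part_surj [f_local psiE]]]]].
have [idx bitsK idxK] := bits_bij n.
have qbit_idx x k : qbit (idx x) k = x k by rewrite -[in RHS](idxK x) ffunE.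
pose F g x := f g (idx x).
have F_local g x : F g x = F g (bmask part g x).
  by apply: f_local => k part_k; rewrite !qbit_idx ffunE part_k eqxx.
rewrite (trace_Wse idxK bitsK) /= !psiE.
under eq_bigr do rewrite !psiE.
apply: (product_state_value_le part_surj F_local) => //.
apply: (@complexI R); rewrite rmorph_sum rmorph1 -[RHS]normed (reindex idx) /=; last first.
  by apply: onW_bij; exists bits.
by apply: eq_bigr => x _; rewrite rmorphXn /= -normr_normc psiE.
Qed.

Local Open Scope complex_scope.

Theorem mainTheorem1 (R : realType) (n m : nat) (alpha : R)
    (rho : 'M[R[i]]_(2 ^ n)) :
  (2 <= n)%N -> (2 <= m)%N -> (m <= n)%N ->
  0 < alpha -> alpha <= 2 ->
  m_separable m rho ->
  \tr (rho *m Wse n alpha%:C) <=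
    (Num.max alpha (alpha / 2 ^+ (m - 1) + 1))%:C.
Proof.
(* the bound holds without the hypotheses on n, on m <= n and on alpha <= 2 *)
move=> _ m_ge2 _ a0 _ [N [w [psi [w0 [w_sum [psi_sep ->]]]]]].
rewrite mulmx_suml raddf_sum.
under eq_bigr do rewrite /= -scalemxAl mxtraceZ.
apply: le_trans (_ : \sum_(j < N) w j * _ <= _).
  apply: ler_sum => j _; rewrite ler_wpM2l //.
  exact: pure_value_le (ltnW m_ge2) a0 (psi_sep j).
by rewrite -mulr_suml w_sum mul1r.
Qed.
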